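(* Let $\Phi=(G,\varphi)$ be a $\mathbb{T}$-gain graph on a connected graph $G$ with maximum vertex degree $\Delta$. Then $\rho(A(\Phi))=\Delta$ if and only if $G$ is $\Delta$-regular and either $\Phi$ or $-\Phi$ is balanced.
   Context: Graphs are finite, simple and undirected. $\mathbb{T}=\{z\in\mathbb{C}:|z|=1\}$. A $\mathbb{T}$-gain on $G$ is a map $\varphi$ from oriented edges to $\mathbb{T}$ with $\varphi(\overrightarrow{e_{ts}})=\varphi(\overrightarrow{e_{st}})^{-1}$; $A(\Phi)$ is the Hermitian matrix with $(s,t)$ entry $\varphi(\overrightarrow{e_{st}})$ if $v_s\sim v_t$, else $0$; $\rho$ is the spectral radius. $-\Phi$ denotes the gain graph $(G,-\varphi)$. The gain of a directed cycle is the product of the gains of its oriented edges; $\Phi$ is balanced if every directed cycle has gain $1$. *)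

From HB Require Import structures.
From mathcomp Require Import all_boot all_order all_algebra.
Set Implicit Arguments. Unset Strict Implicit. Unset Printing Implicit Defensive.
Import Order.TTheory GRing.Theory Num.Theory.
Local Open Scope ring_scope.

Definition simple_graph (n : nat) (e : rel 'I_n) : Prop :=
  (forall i j, e i j = e j i) /\ (forall i, ~~ e i i).

Definition connected_graph (n : nat) (e : rel 'I_n) : Prop :=
  (0 < n)%N /\ forall i j, connect e i j.

Definition deg (n : nat) (e : rel 'I_n) (i : 'I_n) : nat := #|[pred j | e i j]|.

Definition max_deg (n : nat) (e : rel 'I_n) : nat := (\max_(i < n) deg e i)%N.

Definition regular (n : nat) (e : rel 'I_n) (k : nat) : Prop :=
  forall i, deg e i = k.

(* phi i j = gain of the oriented edge from v_i to v_j (only relevant on edges). *)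
Definition T_gain (C : numClosedFieldType) (n : nat) (e : rel 'I_n)
  (phi : 'I_n -> 'I_n -> C) : Prop :=
  forall i j, e i j -> `|phi i j| = 1 /\ phi j i = (phi i j)^-1.

Definition gain_adj (C : numClosedFieldType) (n : nat) (e : rel 'I_n)
  (phi : 'I_n -> 'I_n -> C) : 'M[C]_n :=
  \matrix_(i, j) (if e i j then phi i j else 0).

Definition directed_cycle (n : nat) (e : rel 'I_n) (c : seq 'I_n) : bool :=
  [&& (2 < size c)%N, uniq c & cycle e c].

Definition cycle_gain (C : numClosedFieldType) (n : nat)
  (phi : 'I_n -> 'I_n -> C) (c : seq 'I_n) : C :=
  \prod_(p <- zip c (rot 1 c)) phi p.1 p.2.

Definition balanced (C : numClosedFieldType) (n : nat) (e : rel 'I_n)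
  (phi : 'I_n -> 'I_n -> C) : Prop :=
  forall c, directed_cycle e c -> cycle_gain phi c = 1.

Definition spectral_radius_is (C : numClosedFieldType) (n : nat)
  (A : 'M[C]_n) (r : C) : Prop :=
  (exists2 l, eigenvalue A l & `|l| = r) /\
  (forall l, eigenvalue A l -> `|l| <= r).

From HB Require Import structures.
From mathcomp Require Import all_boot all_order all_algebra.
From mathcomp Require Import ring.
Set Implicit Arguments. Unset Strict Implicit. Unset Printing Implicit Defensive.
Import Order.TTheory GRing.Theory Num.Theory.
Local Open Scope ring_scope.

(* Let v A = l v with |l| = D, the maximum degree.  At an entry of v of maximal
   modulus M, the triangle inequality |l v_j| <= sum_(i ~ j) |v_i| <= deg j * M
   must be tight: deg j = D, |v_i| = M and v_i phi_ij = (l / D) v_j for every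
   neighbour i.  By connectivity this holds at every vertex and on every edge.
   Reading the relation on both orientations of an edge gives s := l / D = +-1,
   and then s phi_ij = v_j / v_i, so the gain s phi is a switching of the
   trivial gain, hence balanced.  Conversely, a balanced gain on a connected
   graph is of the form f_j / f_i (grow f over a connected vertex set; balance
   of the cycle closed by each new edge makes the extension consistent), and
   then f is an eigenvector of a D-regular graph for the eigenvalue +-D. *)

Section PathGain.
Variables (T : Type) (F : fieldType).
Implicit Types (r : rel T) (psi : T -> T -> F) (f : T -> F) (x y : T) (s : seq T).

Fixpoint path_gain psi x s : F :=
  if s is y :: s' then psi x y * path_gain psi y s' else 1.

Lemma path_gain_rcons psi x s y :
  path_gain psi x (rcons s y) = path_gain psi x s * psi (last x s) y.
Proof. by elim: s x => [|z s IH] x /=; rewrite ?mulr1 ?mul1r // IH mulrA. Qed.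

Lemma big_zip_path_gain psi x s y :
  \prod_(p <- zip (x :: s) (rcons s y)) psi p.1 p.2 = path_gain psi x (rcons s y).
Proof. by elim: s x => [|z s IH] x /=; rewrite big_cons ?big_nil ?IH. Qed.

(* [f] switches [psi] to the trivial gain along the edges of [r]. *)
Definition potential r psi f : Prop :=
  (forall a, f a != 0) /\ (forall a b, r a b -> psi a b = f b / f a).

Lemma path_gain_potential r psi f x s :
  potential r psi f -> path r x s -> path_gain psi x s = f (last x s) / f x.
Proof.
case=> fnz hf; elim: s x => [|y s IH] x /=; first by rewrite divff.
by case/andP=> rxy /IH ->; rewrite hf // mulrC mulrA mulfVK.
Qed.

End PathGain.

Lemma connect_exit_edge (T : finType) (e : rel T) (S : {pred T}) x y :
  connect e x y -> x \in S -> y \notin S ->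
  exists i j, [/\ i \in S, j \notin S & e i j].
Proof.
move=> /connectP[p + ->]; elim: p x => [|z p IH] x /=; first by move=> _ ->.
case/andP=> exz pz xS; case zS: (z \in S); first exact: IH.
by move=> _; exists x, z; rewrite zS.
Qed.

Lemma exists_real_argmax (I : finType) (R : numDomainType) (F : I -> R) (i0 : I) :
  (forall i, F i \is Num.real) -> exists j, forall i, F i <= F j.
Proof.
move=> F_real; suff [j Fj] : exists j, forall i, i \in enum I -> F i <= F j.
  by exists j => i; apply/Fj; rewrite mem_enum.
elim: (enum I) => [|a s [j Fj]]; first by exists i0.
have [Faj | Fja] := real_leP (F_real a) (F_real j).
  by exists j => i /predU1P[-> | /Fj].
exists a => i /predU1P[-> // | /Fj Fij]; exact/(le_trans Fij)/ltW.
Qed.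

Lemma norm_sum_le_card (I : finType) (R : numDomainType) (P : pred I) (F : I -> R) M :
  (forall i, P i -> `|F i| <= M) -> `|\sum_(i | P i) F i| <= #|P|%:R * M.
Proof.
move=> le_FM; apply: le_trans (ler_norm_sum _ _ _) _.
by rewrite mulr_natl -sumr_const; apply: ler_sum.
Qed.

Lemma norm_sum_eq_card (C : numClosedFieldType) (I : finType) (P : pred I)
    (F : I -> C) M :
  (forall i, P i -> `|F i| <= M) -> `|\sum_(i | P i) F i| = #|P|%:R * M ->
  forall i, P i -> F i *+ #|P| = \sum_(i | P i) F i.
Proof.
move=> le_FM eq_sum i Pi; set S := \sum_(i | P i) F i in eq_sum *.
have P_gt0 : (0 < #|P|)%N by apply/card_gt0P; exists i.
have [S0 | S_neq0] := eqVneq S 0.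
  have : #|P|%:R * M == 0 by rewrite -eq_sum S0 normr0.
  rewrite mulf_eq0 pnatr_eq0 eqn0Ngt P_gt0 /= => /eqP M0.
  by have := le_FM i Pi; rewrite M0 normr_le0 S0 => /eqP->; rewrite mul0rn.
(* dividing by the phase t of the sum makes every term real and equal to M *)
pose t := S / `|S|.
have t_neq0 : t != 0 by rewrite mulf_neq0 ?invr_eq0 ?normr_eq0.
have Ft k : P k -> F k / t = M.
  move: k; apply: (normC_sum_upper (G := fun=> M)) => [k Pk | ].
    by rewrite normf_div /t normf_div normr_id divff ?normr_eq0 // divr1 le_FM.
  rewrite -mulr_suml -/S /t invf_div mulrCA divff // mulr1 eq_sum.
  by rewrite sumr_const mulr_natl.
rewrite -[F i](divfK t_neq0) Ft // -mulrnAl -mulr_natl -eq_sum /t mulrCA.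
by rewrite divff ?normr_eq0 ?mulr1.
Qed.

Lemma exists_max_entry (R : numDomainType) m (v : 'rV[R]_m) :
  v != 0 -> exists2 j, 0 < `|v 0 j| & forall i, `|v 0 i| <= `|v 0 j|.
Proof.
move=> v_neq0; have [k vk] : exists k, v 0 k != 0.
  apply/existsP; apply: contraNT v_neq0 => /existsPn v0.
  by apply/eqP/rowP => k; rewrite mxE; apply/eqP/negPn/v0.
have [j vmax] := @exists_real_argmax _ R (fun i => `|v 0 i|) k (fun i => normr_real _).
by exists j => //; apply: lt_le_trans (vmax k); rewrite normr_gt0.
Qed.

Section Balance.
Variables (C : numClosedFieldType) (n : nat) (e : rel 'I_n).
Implicit Types (psi : 'I_n -> 'I_n -> C) (f : 'I_n -> C) (S : {set 'I_n}).

Lemma cycle_gain_path_gain psi x s :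
  cycle_gain psi (x :: s) = path_gain psi x (rcons s x).
Proof. by rewrite /cycle_gain rot1_cons big_zip_path_gain. Qed.

Lemma potential_balanced psi f : potential e psi f -> balanced e psi.
Proof.
move=> pf [|x s] /and3P[_ _ hc] //.
by rewrite cycle_gain_path_gain (path_gain_potential pf hc) last_rcons divff //; case: pf.
Qed.

Definition inv_gain psi : Prop :=
  forall a b, e a b -> psi a b != 0 /\ psi b a = (psi a b)^-1.

Definition induced S : rel 'I_n := [rel a b | [&& e a b, a \in S & b \in S]].

Definition linked S : Prop :=
  forall a b, a \in S -> b \in S -> connect (induced S) a b.

Section Extension.
Variables (psi : 'I_n -> 'I_n -> C) (S : {set 'I_n}) (f : 'I_n -> C) (i j : 'I_n).
Hypotheses (sg : simple_graph e) (lS : linked S) (iS : i \in S) (eij : e i j).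

Lemma linked_extend : linked (j |: S).
Proof.
have sub : subrel (induced S) (connect (induced (j |: S))).
  by move=> a b /and3P[eab aS bS]; apply: connect1; rewrite /induced /= eab !inE aS bS !orbT.
have lSS a b : a \in S -> b \in S -> connect (induced (j |: S)) a b.
  by move=> aS bS; apply: connect_sub sub _ _ (lS aS bS).
have eij' : induced (j |: S) i j by rewrite /induced /= eij !inE iS eqxx !orbT.
have eji' : induced (j |: S) j i by rewrite /induced /= (proj1 sg) eij !inE iS eqxx !orbT.
move=> a b /setU1P[-> | aS] /setU1P[-> | bS]; first exact: connect0.
- exact: connect_trans (connect1 eji') (lSS _ _ iS bS).
- exact: connect_trans (lSS _ _ aS iS) (connect1 eij').
- exact: lSS.
Qed.

Hypotheses (jS : j \notin S) (gpsi : inv_gain psi) (bal : balanced e psi).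
Hypothesis (pf : potential (induced S) psi f).

Lemma balanced_closing_edge k :
  k \in S -> e j k -> k != i -> psi j k = f k / (f i * psi i j).
Proof.
move=> kS ejk kNi.
(* close the edges (j, k) and (i, j) by a simple path from k to i inside S *)
case/connectP: (lS kS iS) => p pth lastp.
case: (shortenP pth) lastp => q qth q_uniq _ lastq.
have qS : all (mem S) q.
  by elim: q k {kS ejk kNi lastq q_uniq pth} qth => //= a q IH k /andP[/and3P[_ _ ->] /IH].
have q_nil : q != [::] by apply: contraNneq kNi => q0; rewrite lastq q0.
have jNq : j \notin k :: q.
  by rewrite inE negb_or (contra (allP qS j)) // andbT; apply: contraNneq jS => ->.
have dc : directed_cycle e (j :: k :: q).
  rewrite /directed_cycle /= !ltnS lt0n size_eq0 q_nil jNq -/(uniq (k :: q)) q_uniq ejk /=.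
  rewrite rcons_path -lastq eij andbT.
  by apply: sub_path qth => a b /andP[].
have := bal dc; rewrite cycle_gain_path_gain /= path_gain_rcons -lastq.
rewrite (path_gain_potential pf qth) -lastq => cycle1.
have [[fnz _] [pij _]] := (pf, gpsi eij).
by rewrite -[RHS]mul1r -cycle1; field; rewrite pij !fnz.
Qed.

Lemma potential_extend :
  potential (induced (j |: S)) psi (fun a => if a == j then f i * psi i j else f a).
Proof.
have [[esym eirr] [fnz fS]] := (sg, pf); have [pij pji] := gpsi eij.
have fSE a : a \in S -> (if a == j then f i * psi i j else f a) = f a.
  by move=> aS; rewrite ifN //; apply: contraNneq jS => <-.
split=> [a | a b /and3P[eab aSj bSj]]; first by case: ifP; rewrite ?mulf_neq0.
case/setU1P: aSj eab => [-> | aS]; case/setU1P: bSj => [-> | bS] eab.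
- by rewrite (negbTE (eirr j)) in eab.
- rewrite eqxx fSE //; have [-> | bNi] := eqVneq b i; last exact: balanced_closing_edge.
  by rewrite pji; field; rewrite pij fnz.
- rewrite eqxx fSE //; have [-> | aNi] := eqVneq a i; first by field; rewrite fnz.
  have eja : e j a by rewrite esym.
  have [_ ->] := gpsi eja; rewrite balanced_closing_edge //.
  by field; rewrite pij !fnz.
- by rewrite !fSE //; apply: fS; rewrite /induced /= eab aS bS.
Qed.

End Extension.

Lemma balanced_potential psi :
  simple_graph e -> connected_graph e -> inv_gain psi -> balanced e psi ->
  exists f, potential e psi f.
Proof.
move=> sg [n_gt0 econ] gpsi bal; pose r := Ordinal n_gt0.
suff grow S f : r \in S -> linked S -> potential (induced S) psi f ->
    exists g, potential e psi g.
  apply: (grow [set r] (fun _ => 1)); first by rewrite inE.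
    by move=> a b /set1P-> /set1P->; apply: connect0.
  split=> [_ | a b /and3P[eab /set1P ar /set1P br]]; first exact: oner_neq0.
  by move: eab; rewrite ar br (negbTE (proj2 sg r)).
have [k] := ubnP #|~: S|; elim: k S f => // k IH S f cardS rS lS pf.
have [S_full | /set0Pn[y]] := eqVneq (~: S) set0.
  have inS a : a \in S by apply/negbNE; rewrite -in_setC S_full inE.
  case: pf => fnz fS; exists f; split=> // a b eab.
  by apply: fS; rewrite /induced /= eab !inS.
rewrite inE => yS; have [i [j [iS jS eij]]] := connect_exit_edge (econ r y) rS yS.
move: (potential_extend sg lS iS eij jS gpsi bal pf); apply: IH.
- rewrite -ltnS; apply: leq_trans cardS; rewrite ltnS; apply: proper_card.
  by rewrite properC properUr // sub1set.
- by rewrite setU1r.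
- exact: linked_extend sg lS iS eij.
Qed.

Lemma T_gain_inv_gain psi : T_gain e psi -> inv_gain psi.
Proof.
move=> tg a b eab; have [psi_norm ->] := tg _ _ eab.
by split=> //; rewrite -normr_eq0 psi_norm oner_neq0.
Qed.

Lemma inv_gain_scale psi s :
  s ^+ 2 = 1 -> inv_gain psi -> inv_gain (fun a b => s * psi a b).
Proof.
move=> s2 gpsi a b eab; have [psi_neq0 ->] := gpsi _ _ eab.
have s_neq0 : s != 0 by apply: contra_eq_neq s2 => ->; rewrite expr0n eq_sym oner_eq0.
split; first by rewrite mulf_neq0.
by rewrite invfM -[s^-1]mulr1 -s2 expr2 mulKf.
Qed.

Lemma edge_relation_signed_potential psi (x : 'I_n -> C) s a0 b0 :
  simple_graph e -> inv_gain psi -> (forall a, x a != 0) ->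
  (forall a b, e a b -> x a * psi a b = s * x b) -> e a0 b0 ->
  s ^+ 2 = 1 /\ potential e (fun a b => s * psi a b) x.
Proof.
move=> sg gpsi xnz xE e0.
have s2 : s ^+ 2 = 1.
  have [psi0 psi_inv] := gpsi _ _ e0.
  have e0' : e b0 a0 by rewrite (proj1 sg).
  apply: (mulIf (mulf_neq0 (xnz a0) (xnz b0))).
  transitivity ((s * x b0) * (s * x a0)); first by ring.
  by rewrite -(xE _ _ e0) -(xE _ _ e0') psi_inv; field.
split=> //; split=> // a b eab; apply: (mulIf (xnz a)).
by rewrite mulfVK // -mulrA (mulrC (psi a b)) xE // mulrA -expr2 s2 mul1r.
Qed.

Lemma balanced_ext psi psi' :
  (forall a b, psi a b = psi' a b) -> balanced e psi -> balanced e psi'.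
Proof.
move=> psiE bal c /bal <-; rewrite /cycle_gain.
by apply: eq_bigr => p _; rewrite psiE.
Qed.

Lemma balanced_signed psi :
  (balanced e psi \/ balanced e (fun a b => - psi a b)) <->
  exists2 s : C, s ^+ 2 = 1 & balanced e (fun a b => s * psi a b).
Proof.
split=> [[bal | bal] | [s /eqP]].
- by exists 1; [rewrite expr1n | apply: balanced_ext bal => a b; rewrite mul1r].
- by exists (-1); [rewrite sqrrN expr1n | apply: balanced_ext bal => a b; rewrite mulN1r].
rewrite sqrf_eq1 => /orP[/eqP-> | /eqP->] bal; [left | right];
  by apply: balanced_ext bal => a b; rewrite ?mul1r ?mulN1r.
Qed.

End Balance.

Section Spectrum.
Variables (C : numClosedFieldType) (n : nat) (e : rel 'I_n) (phi : 'I_n -> 'I_n -> C).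
Hypotheses (sg : simple_graph e) (tg : T_gain e phi).

Lemma gain_adj_row_mul (v : 'rV[C]_n) j :
  (v *m gain_adj e phi) 0 j = \sum_(i | e i j) v 0 i * phi i j.
Proof.
rewrite mxE [RHS]big_mkcond; apply: eq_bigr => i _ /=.
by rewrite mxE; case: (e i j); rewrite ?mulr0.
Qed.

Lemma card_in_neighbours j : #|e^~ j| = deg e j.
Proof. by apply: eq_card => i; rewrite !inE /= (proj1 sg). Qed.

Lemma deg_le_max_deg j : (deg e j <= max_deg e)%N.
Proof. exact: (leq_bigmax j). Qed.

Lemma deg_gt0 i j : e i j -> (0 < deg e j)%N.
Proof. by move=> eij; rewrite -card_in_neighbours; apply/card_gt0P; exists i. Qed.

Section Eigenvector.
Variables (v : 'rV[C]_n) (l : C).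
Hypothesis (hv : v *m gain_adj e phi = l *: v).

Lemma eigen_neighbour_sum j : \sum_(i | e i j) v 0 i * phi i j = l * v 0 j.
Proof. by rewrite -gain_adj_row_mul hv mxE. Qed.

Lemma eigen_norm_le j M :
  (forall i, `|v 0 i| <= M) -> `|l| * `|v 0 j| <= (deg e j)%:R * M.
Proof.
move=> le_vM; rewrite -normrM -eigen_neighbour_sum -card_in_neighbours.
by apply: norm_sum_le_card => i eij; rewrite normrM (tg eij).1 mulr1.
Qed.

Lemma eigen_max_entry_neighbours j :
  `|l| = (max_deg e)%:R -> (forall i, `|v 0 i| <= `|v 0 j|) -> 0 < `|v 0 j| ->
  deg e j = max_deg e /\
  forall i, e i j -> `|v 0 i| = `|v 0 j| /\ v 0 i * phi i j *+ max_deg e = l * v 0 j.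
Proof.
move=> hl vmax vj_gt0.
have deg_j : deg e j = max_deg e.
  apply/eqP; rewrite eqn_leq deg_le_max_deg -(ler_nat C) -(ler_pM2r vj_gt0) -hl.
  exact: eigen_norm_le.
have edge_eq i : e i j -> v 0 i * phi i j *+ max_deg e = l * v 0 j.
  move=> eij; rewrite -deg_j -card_in_neighbours -eigen_neighbour_sum.
  apply: norm_sum_eq_card eij => [k ekj | ]; first by rewrite normrM (tg ekj).1 mulr1.
  by rewrite eigen_neighbour_sum normrM hl card_in_neighbours deg_j.
split=> // i eij; split; last exact: edge_eq.
have := congr1 Num.norm (edge_eq i eij).
rewrite normrMn !normrM (tg eij).1 mulr1 hl mulr_natl.
by apply: pmulrnI; rewrite -deg_j (deg_gt0 eij).
Qed.

Lemma eigen_norm_const j0 :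
  connected_graph e -> `|l| = (max_deg e)%:R ->
  (forall i, `|v 0 i| <= `|v 0 j0|) -> 0 < `|v 0 j0| ->
  forall j, `|v 0 j| = `|v 0 j0|.
Proof.
move=> [_ econ] hl vmax v_gt0 j; apply/eqP; apply: contraT => vjN.
have [a [b []]] := connect_exit_edge (S := [pred k | `|v 0 k| == `|v 0 j0|])
  (econ j0 j) (eqxx _) vjN.
rewrite !inE => /eqP aM + eab; have eba : e b a by rewrite (proj1 sg).
have amax i : `|v 0 i| <= `|v 0 a| by rewrite aM.
by rewrite ((eigen_max_entry_neighbours hl amax _).2 b eba).1 ?aM ?eqxx.
Qed.
End Eigenvector.

Lemma eigenvalue_norm_le_max_deg l :
  eigenvalue (gain_adj e phi) l -> `|l| <= (max_deg e)%:R.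
Proof.
case/eigenvalueP => v hv v_neq0; have [j vj_gt0 vmax] := exists_max_entry v_neq0.
rewrite -(ler_pM2r vj_gt0); apply: le_trans (eigen_norm_le hv j vmax) _.
by rewrite ler_wpM2r ?ler_nat ?deg_le_max_deg // ltW.
Qed.

Lemma max_deg_eigenvalue_regular_balanced l :
  connected_graph e -> eigenvalue (gain_adj e phi) l -> `|l| = (max_deg e)%:R ->
  regular e (max_deg e) /\
  (exists2 s : C, s ^+ 2 = 1 & balanced e (fun a b => s * phi a b)).
Proof.
move=> cg /eigenvalueP[v hv v_neq0] hl.
have [j0 vj0_gt0 vmax] := exists_max_entry v_neq0.
have vconst := eigen_norm_const hv cg hl vmax vj0_gt0.
have vmax' j i : `|v 0 i| <= `|v 0 j| by rewrite !vconst.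
have v_gt0 j : 0 < `|v 0 j| by rewrite vconst.
have nbj j := eigen_max_entry_neighbours hv hl (vmax' j) (v_gt0 j).
split=> [j | ]; first exact: (nbj j).1.
have vnz a : v 0 a != 0 by rewrite -normr_gt0.
have [D0 | D_gt0] := posnP (max_deg e).
  exists 1; first by rewrite expr1n.
  apply: (potential_balanced (f := fun _ => 1)); split=> [_ | a b eab].
    exact: oner_neq0.
  by have := deg_gt0 eab; rewrite (nbj b).1 D0.
have [k ekj0] : exists k, e k j0.
  by move: D_gt0; rewrite -(nbj j0).1 -card_in_neighbours => /card_gt0P[k]; exists k.
have D_neq0 : (max_deg e)%:R != 0 :> C by rewrite pnatr_eq0 -lt0n.
have v_rel a b : e a b -> v 0 a * phi a b = l / (max_deg e)%:R * v 0 b.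
  move=> eab; apply: (mulIf D_neq0).
  by rewrite mulr_natr ((nbj b).2 a eab).2 mulrAC divfK.
have [s2 pot] := edge_relation_signed_potential sg (T_gain_inv_gain tg) vnz v_rel ekj0.
by exists (l / (max_deg e)%:R); last exact: potential_balanced pot.
Qed.

Lemma potential_eigenvector k s f :
  regular e k -> s ^+ 2 = 1 -> potential e (fun a b => s * phi a b) f ->
  (\row_a f a) *m gain_adj e phi = (s * k%:R) *: \row_a f a.
Proof.
move=> reg s2 [fnz hf]; apply/rowP => j; rewrite gain_adj_row_mul !mxE.
rewrite (eq_bigr (fun=> s * f j)) => [|i eij]; last first.
  by rewrite mxE -[phi i j]mul1r -s2 expr2 -mulrA hf // mulrCA [f i * _]mulrC (divfK (fnz i)).
by rewrite sumr_const card_in_neighbours reg mulrAC mulr_natr.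
Qed.

Lemma regular_balanced_eigenvalue k :
  connected_graph e -> regular e k ->
  (exists2 s : C, s ^+ 2 = 1 & balanced e (fun a b => s * phi a b)) ->
  exists2 l, eigenvalue (gain_adj e phi) l & `|l| = k%:R.
Proof.
move=> cg reg [s s2 bal].
have [f pf] := balanced_potential sg cg (inv_gain_scale s2 (T_gain_inv_gain tg)) bal.
exists (s * k%:R).
  apply/eigenvalueP; exists (\row_a f a); first exact: potential_eigenvector.
  have [[fnz _] [n_gt0 _]] := (pf, cg).
  by apply/eqP => /rowP/(_ (Ordinal n_gt0)); rewrite !mxE; apply/eqP/fnz.
move/eqP: s2; rewrite normrM normr_nat sqrf_eq1 => /orP[] /eqP->.
  by rewrite normr1 mul1r.
by rewrite normrN normr1 mul1r.
Qed.
End Spectrum.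

Theorem theorem5p3 (C : numClosedFieldType) (n : nat) (e : rel 'I_n)
  (phi : 'I_n -> 'I_n -> C) :
  simple_graph e -> connected_graph e -> T_gain e phi ->
  spectral_radius_is (gain_adj e phi) (max_deg e)%:R <->
  (regular e (max_deg e) /\
   (balanced e phi \/ balanced e (fun i j => - phi i j))).
Proof.
move=> sg cg tg; split.
  case=> -[l eig_l norm_l] _.
  have [reg sbal] := max_deg_eigenvalue_regular_balanced sg tg cg eig_l norm_l.
  by split; last exact/balanced_signed.
case=> reg /balanced_signed sbal; split.
  exact: (regular_balanced_eigenvalue sg tg cg reg sbal).
exact: eigenvalue_norm_le_max_deg sg tg.
Qed.
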